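(* Let $(x_0,y_0)\in\{(\tfrac{\pi}{4},-\tfrac{3\pi}{4}),\,(\tfrac{3\pi}{4},-\tfrac{\pi}{4})\}$ and let $U\subset\mathbb{R}^2$ be an open neighborhood of $(x_0,y_0)$. Let $\mathcal{A},\mathcal{B}:U\to[-1,1]$ be functions that are differentiable at $(x_0,y_0)$ and satisfy $\mathcal{A}(x_0,y_0)=\mathcal{B}(x_0,y_0)=0$ and $\nabla(\mathcal{A}-\mathcal{B})(x_0,y_0)\neq 0$ (i.e. $(x_0,y_0)$ is not a critical point of $\mathcal{A}-\mathcal{B}$). For $(x,y)\in\mathbb{R}^2$ put $C(x,y)=-\cos(x-y)$. Then there exist real numbers $\mu\neq 0$, $\nu\neq 0$ and $\epsilon_0>0$ such that for every $\epsilon\in(0,\epsilon_0)$, at the point $(x,y)=(x_0+\mu\epsilon,\,y_0+\nu\epsilon)$ at least one of the two inequalities $$|C(x,y)+\mathcal{A}(x,y)|+|\mathcal{B}(x,y)-C(x,y)|\le 2,\qquad |C(x,y)-\mathcal{A}(x,y)|+|\mathcal{B}(x,y)+C(x,y)|\le 2$$ is false.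
   Context: Physical interpretation (not needed for the mathematics): $(x,y)=(\theta_{\bm a},\theta_{\bm b})$ parametrizes quadruplets of measurement directions in a plane with $\theta_{\bm a'}=-\theta_{\bm a}$, $\theta_{\bm b'}=-\theta_{\bm b}$; $C$ is the quantum correlation $\langle a,b\rangle=\langle a',b'\rangle=-\cos(\theta_{\bm a}-\theta_{\bm b})$, $\mathcal{A}=\langle a,a'\rangle$, $\mathcal{B}=\langle b,b'\rangle$, and the two displayed inequalities are the ''Boole inequalities'' $|\langle a,b\rangle\pm\langle a,a'\rangle|+|\langle b',b\rangle\mp\langle b',a'\rangle|\le 2$, which hold for correlations of $\{-1,1\}$-valued sequences. The conclusion thus says that these assumptions on $\mathcal{A},\mathcal{B}$ are incompatible with the Boole inequalities. *)

From Stdlib Require Import Reals.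
Open Scope R_scope.

Definition open2 (U : R -> R -> Prop) : Prop :=
  forall x y, U x y -> exists r, 0 < r /\
    forall x' y', Rabs (x' - x) < r -> Rabs (y' - y) < r -> U x' y'.

Definition has_grad_at (U : R -> R -> Prop) (f : R -> R -> R) (x0 y0 a b : R) : Prop :=
  forall eps, 0 < eps -> exists delta, 0 < delta /\
    forall x y, U x y -> Rabs (x - x0) < delta -> Rabs (y - y0) < delta ->
      Rabs (f x y - f x0 y0 - (a * (x - x0) + b * (y - y0)))
        <= eps * (Rabs (x - x0) + Rabs (y - y0)).

Definition Ccorr (x y : R) : R := - cos (x - y).

From Stdlib Require Import Reals Lra.
Open Scope R_scope.

(* Both base points satisfy x0 - y0 = PI, so near them
   C(x0+u, y0+v) = cos (u - v) is 1 up to a quadratic error.  Choosing the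
   direction (mu, nu) = (1, nu) with nu in {1, 2} so that the directional
   derivative D of A - B is nonzero, |A - B| grows linearly, like |D| eps / 2,
   while 2 - 2C is at most eps^2.  A purely algebraic fact then finishes:
   whenever |a - b| > 2 - 2c, one of the two Boole sums exceeds 2. *)

Lemma cos_quadratic_lower (t : R) : -1 <= t <= 1 -> 1 - t * t / 2 <= cos t.
Proof.
  intros Ht.
  assert (Hpi : 1 < PI / 2) by exact PI2_1.
  destruct (cos_bound t 0 ltac:(lra) ltac:(lra)) as [Hcos _].
  unfold cos_approx, cos_term in Hcos; simpl in Hcos.
  lra.
Qed.

Lemma Ccorr_antipodal (x0 y0 u v : R) :
  x0 - y0 = PI -> Ccorr (x0 + u) (y0 + v) = cos (u - v).
Proof.
  intros Hd; unfold Ccorr.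
  replace (x0 + u - (y0 + v)) with (u - v + PI) by lra.
  rewrite neg_cos; ring.
Qed.

(* Algebraic core: if a and b differ by more than 2 - 2c, then one of the two
   Boole inequalities fails (take the sign of a - b). *)
Lemma boole_violation (a b c : R) :
  2 - 2 * c < Rabs (a - b) ->
  ~ (Rabs (c + a) + Rabs (b - c) <= 2) \/ ~ (Rabs (c - a) + Rabs (b + c) <= 2).
Proof.
  intros Hgap.
  pose proof (Rle_abs (c + a)); pose proof (Rle_abs (c - a)).
  pose proof (Rle_abs (b + c)); pose proof (Rle_abs (- (b - c))).
  rewrite Rabs_Ropp in *.
  destruct (Rcase_abs (a - b)) as [Hneg | Hpos].
  - rewrite Rabs_left in Hgap by exact Hneg; right; lra.
  - rewrite Rabs_right in Hgap by exact Hpos; left; lra.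
Qed.

Lemma has_grad_at_sub (U : R -> R -> Prop) (f g : R -> R -> R) (x0 y0 af bf ag bg : R) :
  has_grad_at U f x0 y0 af bf -> has_grad_at U g x0 y0 ag bg ->
  has_grad_at U (fun x y => f x y - g x y) x0 y0 (af - ag) (bf - bg).
Proof.
  intros Hf Hg eps Heps.
  destruct (Hf (eps / 2)) as [df [Hdf Hestf]]; [lra |].
  destruct (Hg (eps / 2)) as [dg [Hdg Hestg]]; [lra |].
  exists (Rmin df dg); split; [now apply Rmin_pos |].
  intros x y HU Hx Hy.
  pose proof (Rmin_l df dg); pose proof (Rmin_r df dg).
  specialize (Hestf x y HU ltac:(lra) ltac:(lra)).
  specialize (Hestg x y HU ltac:(lra) ltac:(lra)).
  replace (f x y - g x y - (f x0 y0 - g x0 y0) - ((af - ag) * (x - x0) + (bf - bg) * (y - y0)))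
    with ((f x y - f x0 y0 - (af * (x - x0) + bf * (y - y0)))
          - (g x y - g x0 y0 - (ag * (x - x0) + bg * (y - y0)))) by ring.
  eapply Rle_trans; [apply Rabs_triang |].
  rewrite Rabs_Ropp; lra.
Qed.

Lemma has_grad_at_directional_lower (U : R -> R -> Prop) (h : R -> R -> R)
  (x0 y0 a b mu nu : R) :
  has_grad_at U h x0 y0 a b -> h x0 y0 = 0 -> a * mu + b * nu <> 0 ->
  exists e1, 0 < e1 /\ forall eps, 0 < eps < e1 ->
    U (x0 + mu * eps) (y0 + nu * eps) ->
    Rabs (a * mu + b * nu) * eps / 2 <= Rabs (h (x0 + mu * eps) (y0 + nu * eps)).
Proof.
  intros Hgrad Hh0 HD.
  set (D := a * mu + b * nu) in *.
  set (S := Rabs mu + Rabs nu).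
  assert (HDpos : 0 < Rabs D) by (apply Rabs_pos_lt; exact HD).
  pose proof (Rabs_pos mu); pose proof (Rabs_pos nu).
  assert (HSpos : 0 < S).
  { destruct (Req_dec mu 0) as [Hmu | Hmu].
    - assert (Hnu : nu <> 0) by (intro; apply HD; unfold D; subst; ring).
      pose proof (Rabs_pos_lt nu Hnu); unfold S; lra.
    - pose proof (Rabs_pos_lt mu Hmu); unfold S; lra. }
  destruct (Hgrad (Rabs D / (2 * S))) as [delta [Hdelta Hest]].
  { apply Rdiv_lt_0_compat; lra. }
  exists (delta / S); split; [apply Rdiv_lt_0_compat; lra |].
  intros eps [Heps Hepsd] HU.
  assert (Hdx : Rabs (mu * eps) = Rabs mu * eps) by (rewrite Rabs_mult, (Rabs_right eps); lra).
  assert (Hdy : Rabs (nu * eps) = Rabs nu * eps) by (rewrite Rabs_mult, (Rabs_right eps); lra).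
  assert (HDeps : Rabs (D * eps) = Rabs D * eps) by (rewrite Rabs_mult, (Rabs_right eps); lra).
  assert (HSeps : S * eps < delta).
  { replace delta with (S * (delta / S)) by (field; lra).
    apply Rmult_lt_compat_l; lra. }
  specialize (Hest _ _ HU).
  replace (x0 + mu * eps - x0) with (mu * eps) in Hest by ring.
  replace (y0 + nu * eps - y0) with (nu * eps) in Hest by ring.
  rewrite Hdx, Hdy, Hh0 in Hest.
  specialize (Hest ltac:(unfold S in *; nra) ltac:(unfold S in *; nra)).
  set (p := h (x0 + mu * eps) (y0 + nu * eps)) in *.
  replace (Rabs D / (2 * S) * (Rabs mu * eps + Rabs nu * eps)) with (Rabs D * eps / 2)
    in Hest by (unfold S in *; field; lra).
  replace (p - 0 - (a * (mu * eps) + b * (nu * eps))) with (- (D * eps - p))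
    in Hest by (unfold D; ring).
  rewrite Rabs_Ropp in Hest.
  pose proof (Rabs_triang_inv (D * eps) (D * eps - p)) as Htri.
  replace (D * eps - (D * eps - p)) with p in Htri by ring.
  lra.
Qed.

Lemma open2_segment (U : R -> R -> Prop) (x0 y0 mu nu : R) :
  open2 U -> U x0 y0 ->
  exists e2, 0 < e2 /\ forall eps, 0 < eps < e2 -> U (x0 + mu * eps) (y0 + nu * eps).
Proof.
  intros Hopen HU.
  destruct (Hopen x0 y0 HU) as [r [Hr Hball]].
  set (S := Rabs mu + Rabs nu + 1).
  pose proof (Rabs_pos mu); pose proof (Rabs_pos nu).
  exists (r / S); split; [apply Rdiv_lt_0_compat; unfold S; lra |].
  intros eps [Heps Hepsr].
  assert (HSeps : S * eps < r).
  { replace r with (S * (r / S)) by (unfold S; field; lra).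
    apply Rmult_lt_compat_l; [unfold S; lra | exact Hepsr]. }
  assert (0 <= Rabs mu * eps) by (apply Rmult_le_pos; lra).
  assert (0 <= Rabs nu * eps) by (apply Rmult_le_pos; lra).
  unfold S in HSeps.
  apply Hball.
  - replace (x0 + mu * eps - x0) with (mu * eps) by ring.
    rewrite Rabs_mult, (Rabs_right eps) by lra; lra.
  - replace (y0 + nu * eps - y0) with (nu * eps) by ring.
    rewrite Rabs_mult, (Rabs_right eps) by lra; lra.
Qed.

Lemma nonzero_direction (a b : R) :
  a <> 0 \/ b <> 0 -> exists nu, (nu = 1 \/ nu = 2) /\ a + nu * b <> 0.
Proof.
  intros Hab.
  destruct (Req_dec (a + b) 0) as [Hsum | Hsum].
  - exists 2; split; [now right | lra].
  - exists 1; split; [now left | lra].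
Qed.

Theorem claim2 (x0 y0 : R) (U : R -> R -> Prop) (A B : R -> R -> R)
  (aA bA aB bB : R) :
  ((x0 = PI / 4 /\ y0 = - (3 * PI / 4)) \/ (x0 = 3 * PI / 4 /\ y0 = - (PI / 4))) ->
  open2 U -> U x0 y0 ->
  (forall x y, U x y -> -1 <= A x y <= 1 /\ -1 <= B x y <= 1) ->
  has_grad_at U A x0 y0 aA bA ->
  has_grad_at U B x0 y0 aB bB ->
  A x0 y0 = 0 -> B x0 y0 = 0 ->
  (aA - aB <> 0 \/ bA - bB <> 0) ->
  exists mu nu eps0, mu <> 0 /\ nu <> 0 /\ 0 < eps0 /\
    forall eps, 0 < eps < eps0 ->
      let x := x0 + mu * eps in
      let y := y0 + nu * eps in
      U x y /\
      (~ (Rabs (Ccorr x y + A x y) + Rabs (B x y - Ccorr x y) <= 2) \/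
       ~ (Rabs (Ccorr x y - A x y) + Rabs (B x y + Ccorr x y) <= 2)).
Proof.
  intros Hpt Hopen HU _ HgA HgB HA0 HB0 Hgrad.
  assert (Hanti : x0 - y0 = PI) by (destruct Hpt as [[-> ->] | [-> ->]]; field).
  destruct (nonzero_direction _ _ Hgrad) as [nu [Hnu HD]].
  set (D := (aA - aB) * 1 + (bA - bB) * nu).
  assert (HDpos : 0 < Rabs D) by (apply Rabs_pos_lt; unfold D; lra).
  destruct (has_grad_at_directional_lower U _ x0 y0 _ _ 1 nu
              (has_grad_at_sub _ _ _ _ _ _ _ _ _ HgA HgB) ltac:(lra) ltac:(lra))
    as [e1 [He1 Hlower]].
  destruct (open2_segment U x0 y0 1 nu Hopen HU) as [e2 [He2 Hseg]].
  (* eps < 1 keeps cos in its quadratic regime, eps < |D| / 2 makes the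
     linear growth of |A - B| beat the quadratic defect of C. *)
  exists 1, nu, (Rmin (Rmin e1 e2) (Rmin (Rabs D / 2) 1)).
  split; [lra |]; split; [lra |]; split; [repeat apply Rmin_pos; lra |].
  intros eps Heps x y.
  pose proof (Rmin_l (Rmin e1 e2) (Rmin (Rabs D / 2) 1)).
  pose proof (Rmin_r (Rmin e1 e2) (Rmin (Rabs D / 2) 1)).
  pose proof (Rmin_l e1 e2); pose proof (Rmin_r e1 e2).
  pose proof (Rmin_l (Rabs D / 2) 1); pose proof (Rmin_r (Rabs D / 2) 1).
  assert (HUxy : U x y) by (apply Hseg; lra).
  split; [exact HUxy |].
  assert (Hgap : Rabs D * eps / 2 <= Rabs (A x y - B x y)) by (apply Hlower; [lra | exact HUxy]).
  assert (HC : 1 - eps * eps / 2 <= Ccorr x y).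
  { unfold x, y; rewrite (Ccorr_antipodal _ _ _ _ Hanti).
    eapply Rle_trans; [| apply cos_quadratic_lower; destruct Hnu as [-> | ->]; lra].
    destruct Hnu as [-> | ->]; nra. }
  apply boole_violation; nra.
Qed.
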